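(* Let $H = (V,E)$ be a hypertree with $E = \{e_1, \ldots, e_k\}$ such that $|(e_1 \cup \cdots \cup e_i) \cap e_{i+1}| = 1$ for $i = 1, \ldots, k-1$. Suppose there is a total order $\omega_i$ on each $e_i$, and define a total order $\omega$ on $V$ by $$\omega = (\cdots((\omega_1 \leftarrow \omega_2) \leftarrow \omega_3) \leftarrow \cdots ) \leftarrow \omega_k.$$ Then for any distinct $x,y \in V$, $x <_\omega y$ if and only if $v_r <_{\omega_{j_r}} v_{r+1}$, where $x = v_1, e_{j_1}, v_2, e_{j_2}, \ldots, v_l, e_{j_l}, v_{l+1} = y$ is the unique path from $x$ to $y$ in $H$ and $j_r = \min (j_1, j_2, \ldots, j_l)$.
   Context: A hypergraph is a pair $H=(V,E)$ with $V$ finite and $E$ a family of subsets of $V$ with $|e|>1$. A path is a sequence $v_1, e_1, v_2, \ldots, e_m, v_{m+1}$ with $e_i \in E$, $v_i, v_{i+1} \in e_i$, edges distinct and vertices distinct except that $v_1 = v_{m+1}$ is allowed; if $v_1 = v_{m+1}$ and $m>1$ it is a cycle. A hypertree is a connected hypergraph with no cycles; in a hypertree there is a unique path between any two distinct vertices. Insertion of total orders: given totally ordered sets $(U,\omega_U)$, $(W,\omega_W)$ with $U \cap W = \{x\}$, $\omega_U \leftarrow \omega_W$ is the unique total order on $U \cup W$ agreeing with $\omega_U$ on $U$ and $\omega_W$ on $W$ such that for $u \in U\setminus\{x\}$ and $w \in W$, $u$ precedes $w$ iff $u <_{\omega_U} x$ (i.e. $W$ with its order is inserted in place of $x$ in $U$).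 *)

From mathcomp Require Import all_boot.
Set Implicit Arguments. Unset Strict Implicit. Unset Printing Implicit Defensive.

(* A hypergraph on the finite vertex type T with k edges e 0, ..., e (k-1)
   (the paper's e_1, ..., e_k, shifted to 0-based indices). *)
Section Hyper.
Variables (T : finType) (k : nat) (e : nat -> {set T}).

Definition is_hypergraph : Prop :=
  (forall i, i < k -> 1 < #|e i|) /\ {in [pred i | i < k] &, injective e}.

(* A path v_1, e_{j_1}, v_2, ..., e_{j_m}, v_{m+1}: the vertex list [vs]
   and the list [js] of edge indices. Edges distinct; vertices distinct except
   that v_1 = v_{m+1} is allowed. *)
Definition is_path (vs : seq T) (js : seq nat) : Prop :=
  [/\ size vs = (size js).+1,
      all (fun j => j < k) js,
      uniq js,
      (forall r x0, r < size js ->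
         nth x0 vs r \in e (nth 0 js r) /\ nth x0 vs r.+1 \in e (nth 0 js r))
    & (forall x0, uniq vs \/ (head x0 vs = last x0 vs /\ uniq (behead vs)))].

Definition is_cycle (vs : seq T) (js : seq nat) : Prop :=
  is_path vs js /\ 1 < size js /\ forall x0, head x0 vs = last x0 vs.

Definition connected_hg : Prop :=
  forall x y : T, x != y ->
    exists vs js, is_path vs js /\ head y vs = x /\ last x vs = y.

Definition is_hypertree : Prop :=
  is_hypergraph /\ connected_hg /\ ~ (exists vs js, is_cycle vs js).

Definition union_upto (i : nat) : {set T} := \bigcup_(j < i) e j.

End Hyper.

Definition strict_total_on (T : finType) (A : {set T}) (r : rel T) : Prop :=
  [/\ {in A, forall a, ~~ r a a},
      {in A & &, forall a b c, r a b -> r b c -> r a c}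
    & {in A &, forall a b, a != b -> r a b || r b a}].

(* Insertion omega_U <- omega_W, where U :&: W = [set x]: the order on U :|: W
   agreeing with rU on U and rW on W, where u in U\{x} precedes w in W iff
   u <_{rU} x (and w precedes u iff x <_{rU} u). *)
Definition insert_order (T : finType) (U W : {set T}) (x : T) (rU rW : rel T)
  : rel T :=
  fun a b =>
    if (a \in U) && (b \in U) then rU a b
    else if (a \in W) && (b \in W) then rW a b
    else if (a \in U) && (b \in W) then rU a x
    else if (a \in W) && (b \in U) then rU x b
    else false.

(* omega_upto n = (...((w_0 <- w_1) <- w_2) ...) <- w_{n-1}, an order on
   e_0 ∪ ... ∪ e_{n-1}; the inserted point at each step is the unique element
   of (e_0 ∪ ... ∪ e_{i-1}) ∩ e_i. *)
Fixpoint omega_upto (T : finType) (e : nat -> {set T}) (w : nat -> rel T)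
    (n : nat) : rel T :=
  match n with
  | 0 => fun _ _ => false
  | i.+1 =>
      match [pick v in union_upto e i :&: e i] with
      | Some x => insert_order (union_upto e i) (e i) x (omega_upto e w i) (w i)
      | None => w i
      end
  end.

From mathcomp Require Import all_boot.
From mathcomp Require Import zify.

Set Implicit Arguments.
Unset Strict Implicit.
Unset Printing Implicit Defensive.

(* Adding the edge [e n], which meets the
   earlier vertices only in its hinge [c], leaves the order on old vertices
   unchanged, orders [e n] by [w n], and compares a new vertex with an old one
   as [c] compares with it.  On a path whose edges all carry indices at most
   [n], the edge [e n], if used, must be the first or the last edge (an
   interior use would put two path vertices in the overlap {c}); removing it
   replaces the corresponding endpoint by [c] and preserves the minimal edge
   index unless the path is that single edge. *)

Section InsertOrder.
Variables (T : finType) (U W : {set T}) (x : T) (rU rW : rel T).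

Lemma insert_orderUU a b :
  a \in U -> b \in U -> insert_order U W x rU rW a b = rU a b.
Proof. by rewrite /insert_order => -> ->. Qed.

Lemma insert_orderWW a b : a \in W -> b \in W -> ~~ ((a \in U) && (b \in U)) ->
  insert_order U W x rU rW a b = rW a b.
Proof. by rewrite /insert_order => -> -> /negbTE ->. Qed.

Lemma insert_orderWU a b : a \in W -> a \notin U -> b \in U -> b \notin W ->
  insert_order U W x rU rW a b = rU x b.
Proof. by rewrite /insert_order => -> /negbTE -> -> /negbTE ->. Qed.

Lemma insert_orderUW a b : a \in U -> a \notin W -> b \in W -> b \notin U ->
  insert_order U W x rU rW a b = rU a x.
Proof. by rewrite /insert_order => -> /negbTE -> -> /negbTE ->. Qed.

End InsertOrder.

Section InsertionChain.
Variables (T : finType) (e : nat -> {set T}) (w : nat -> rel T).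

Definition single_overlaps (n : nat) : Prop :=
  forall i, 0 < i < n -> #|union_upto e i :&: e i| = 1.

Lemma single_overlapsW n : single_overlaps n.+1 -> single_overlaps n.
Proof. by move=> ov i /andP[i0 lt_in]; apply: ov; rewrite i0 ltnW. Qed.

Lemma mem_union_upto n i a : i < n -> a \in e i -> a \in union_upto e n.
Proof. by move=> lt_in ea; apply/bigcupP; exists (Ordinal lt_in). Qed.

Lemma union_upto0 : union_upto e 0 = set0.
Proof. by rewrite /union_upto big_ord0. Qed.

Lemma overlap_set1 n : single_overlaps n.+1 -> 0 < n ->
  exists c, union_upto e n :&: e n = [set c].
Proof. by move=> ov n0; apply/cards1P/eqP/ov; rewrite n0 /=. Qed.

Lemma omega_upto1 : omega_upto e w 1 = w 0.
Proof. by rewrite /= union_upto0 set0I; case: pickP => // c; rewrite inE. Qed.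

Section Hinge.
Variables (n : nat) (c : T).
Hypothesis hinge : union_upto e n :&: e n = [set c].

Lemma hinge_eq a : a \in union_upto e n -> a \in e n -> a = c.
Proof. by move=> Ua ea; apply/set1P; rewrite -hinge inE Ua. Qed.

Lemma omega_upto_hinge :
  omega_upto e w n.+1 = insert_order (union_upto e n) (e n) c (omega_upto e w n) (w n).
Proof.
rewrite /= hinge; case: pickP => [c' /set1P -> // | none].
by have := none c; rewrite set11.
Qed.

Lemma omega_upto_old a b : a \in union_upto e n -> b \in union_upto e n ->
  omega_upto e w n.+1 a b = omega_upto e w n a b.
Proof. by rewrite omega_upto_hinge; apply: insert_orderUU. Qed.

Lemma omega_upto_new_old a b : a \in e n -> a \notin union_upto e n ->
  b \in union_upto e n -> b \notin e n ->
  omega_upto e w n.+1 a b = omega_upto e w n c b.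
Proof. by rewrite omega_upto_hinge; apply: insert_orderWU. Qed.

Lemma omega_upto_old_new a b : a \in union_upto e n -> a \notin e n ->
  b \in e n -> b \notin union_upto e n ->
  omega_upto e w n.+1 a b = omega_upto e w n a c.
Proof. by rewrite omega_upto_hinge; apply: insert_orderUW. Qed.

End Hinge.

Lemma overlap_eq n a b : single_overlaps n.+1 ->
  a \in union_upto e n -> b \in union_upto e n -> a \in e n -> b \in e n -> a = b.
Proof.
case: n => [|n] ov; first by rewrite union_upto0 inE.
have [c hinge] := overlap_set1 ov isT => Ua Ub ea eb.
by rewrite (hinge_eq hinge Ua ea) (hinge_eq hinge Ub eb).
Qed.

Lemma omega_upto_new n a b : single_overlaps n.+1 -> a \in e n -> b \in e n ->
  ~~ ((a \in union_upto e n) && (b \in union_upto e n)) ->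
  omega_upto e w n.+1 a b = w n a b.
Proof.
case: n => [|n] ov ea eb not_old; first by rewrite omega_upto1.
have [c hinge] := overlap_set1 ov isT.
by rewrite (omega_upto_hinge hinge); apply: insert_orderWW.
Qed.

(* The path v 0, e (j 0), v 1, ..., e (j l), v l.+1, indexed by functions
   rather than sequences so that dropping an end edge is a reindexing. *)
Definition edge_walk (n l : nat) (v : nat -> T) (j : nat -> nat) : Prop :=
  [/\ {in [pred a | a <= l.+1] &, injective v},
      {in [pred a | a <= l] &, injective j}
    & forall t, t <= l -> [/\ j t < n, v t \in e (j t) & v t.+1 \in e (j t)]].

Lemma edge_walk_behead n l v j : edge_walk n l.+1 v j ->
  edge_walk n l (fun t => v t.+1) (fun t => j t.+1).
Proof.
case=> vinj jinj edges; split=> [a b | a b | t le_tl]; last exact: edges.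
- by rewrite !inE => al bl /vinj-/(_ al bl) [].
- by rewrite !inE => al bl /jinj-/(_ al bl) [].
Qed.

Lemma edge_walk_belast n l v j : edge_walk n l.+1 v j -> edge_walk n l v j.
Proof.
case=> vinj jinj edges; split=> [a b | a b | t le_tl].
- by rewrite !inE => al bl; apply: vinj; rewrite inE ltnW.
- by rewrite !inE => al bl; apply: jinj; rewrite inE ltnW.
- exact/edges/ltnW.
Qed.

Lemma edge_walk_lower n l v j : edge_walk n.+1 l v j ->
  (forall t, t <= l -> j t < n) -> edge_walk n l v j.
Proof.
case=> vinj jinj edges old; split=> // t le_tl.
by have [_ ? ?] := edges t le_tl; split=> //; apply: old.
Qed.

Lemma edge_walk_old_or_new n l v j : edge_walk n.+1 l v j ->
  edge_walk n l v j \/ exists2 s, s <= l & j s = n.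
Proof.
move=> walk.
have [/hasP[s] | /hasPn old] := boolP (has (fun t => j t == n) (iota 0 l.+1)).
  by rewrite mem_iota => le_sl /eqP; right; exists s.
left; apply: (edge_walk_lower walk) => t le_tl; case: walk => _ _ /(_ t le_tl)[].
rewrite ltnS leq_eqVlt => /orP[/eqP jt|] //.
by have := old t; rewrite mem_iota /= jt eqxx => /(_ le_tl).
Qed.

Lemma edge_walk_other_old n l v j s t : edge_walk n.+1 l v j ->
  s <= l -> j s = n -> t <= l -> t != s -> j t < n.
Proof.
case=> _ jinj edges le_sl js le_tl; apply: contraNT; rewrite -leqNgt => le_nj.
have [lt_jn _ _] := edges t le_tl.
apply/eqP/jinj; rewrite ?inE // js; lia.
Qed.

Lemma edge_walk_new_at_end n l v j s : single_overlaps n.+1 ->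
  edge_walk n.+1 l v j -> s <= l -> j s = n -> s = 0 \/ s = l.
Proof.
move=> ov walk le_sl js; case: s le_sl js => [|s] le_sl js; first by left.
have [lt_sl | ] := ltnP s.+1 l; last by right; lia.
have [vinj _ edges] := walk.
have old t : t <= l -> t != s.+1 -> j t < n.
  by move=> le_tl ts; apply: edge_walk_other_old walk le_sl js le_tl ts.
have old_s : j s < n by apply: old; lia.
have old_s2 : j s.+2 < n by apply: old; lia.
have [_ _ /(mem_union_upto old_s) U1] := edges s (ltnW le_sl).
have [_ /(mem_union_upto old_s2) U2 _] := edges s.+2 lt_sl.
have [_] := edges s.+1 le_sl; rewrite js => e1 e2.
have := vinj s.+1 s.+2; rewrite !inE (overlap_eq ov U1 U2 e1 e2).
by move=> /(_ _ _ erefl); lia.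
Qed.

Lemma omega_upto_walk_old n l v j : single_overlaps n.+1 -> edge_walk n l v j ->
  omega_upto e w n.+1 (v 0) (v l.+1) = omega_upto e w n (v 0) (v l.+1).
Proof.
move=> ov walk; have [_ _ edges] := walk.
have [lt_j0 v0 _] := edges 0 isT; have [lt_jl _ vl] := edges l (leqnn l).
have [c hinge] := overlap_set1 ov (leq_ltn_trans (leq0n _) lt_j0).
exact: (omega_upto_old hinge (mem_union_upto lt_j0 v0) (mem_union_upto lt_jl vl)).
Qed.

Lemma omega_upto_walk_single_new n v j : single_overlaps n.+1 ->
  edge_walk n.+1 0 v j -> j 0 = n ->
  omega_upto e w n.+1 (v 0) (v 1) = w n (v 0) (v 1).
Proof.
move=> ov [vinj _ /(_ 0 isT)[_ e0 e1]] j0; rewrite j0 in e0 e1.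
apply: omega_upto_new => //; apply/negP => /andP[U0 U1].
by have /vinj := overlap_eq ov U0 U1 e0 e1; rewrite !inE => /(_ isT isT).
Qed.

Lemma omega_upto_walk_first_new n l v j : single_overlaps n.+1 ->
  edge_walk n.+1 l.+1 v j -> j 0 = n ->
  omega_upto e w n.+1 (v 0) (v l.+2) = omega_upto e w n (v 1) (v l.+2).
Proof.
move=> ov walk j0; have [vinj _ edges] := walk.
have old t : t <= l.+1 -> t != 0 -> j t < n.
  by move=> le_tl t0; exact: (edge_walk_other_old walk (leq0n _) j0 le_tl t0).
have [_] := edges 0 isT; rewrite j0 => e0 e1.
have [_ U1 _] := edges 1 isT; have U1' := mem_union_upto (old 1 isT isT) U1.
have [_ _ Ul] := edges l.+1 (leqnn _).
have Ul' := mem_union_upto (old l.+1 (leqnn _) isT) Ul.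
have [c hinge] := overlap_set1 ov (leq_ltn_trans (leq0n _) (old 1 isT isT)).
have v1c := hinge_eq hinge U1' e1.
have U0 : v 0 \notin union_upto e n.
  apply/negP => U0; have /vinj := overlap_eq ov U0 U1' e0 e1.
  by rewrite !inE => /(_ isT isT).
have el : v l.+2 \notin e n.
  apply/negP => el; have := vinj l.+2 1; rewrite !inE (hinge_eq hinge Ul' el) v1c.
  by move=> /(_ (leqnn _) isT erefl).
by rewrite (omega_upto_new_old hinge e0 U0 Ul' el) v1c.
Qed.

Lemma omega_upto_walk_last_new n l v j : single_overlaps n.+1 ->
  edge_walk n.+1 l.+1 v j -> j l.+1 = n ->
  omega_upto e w n.+1 (v 0) (v l.+2) = omega_upto e w n (v 0) (v l.+1).
Proof.
move=> ov walk jl; have [vinj _ edges] := walk.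
have old t : t <= l.+1 -> t != l.+1 -> j t < n.
  by move=> le_tl tl; apply: edge_walk_other_old walk (leqnn _) jl le_tl tl.
have old0 : j 0 < n by apply: old.
have oldl : j l < n by apply: old; rewrite // (ltn_eqF (ltnSn l)).
have [_] := edges l.+1 (leqnn _); rewrite jl => el el2.
have [_ _ Ul] := edges l (leqW (leqnn _)); have Ul' := mem_union_upto oldl Ul.
have [_ U0 _] := edges 0 isT; have U0' := mem_union_upto old0 U0.
have [c hinge] := overlap_set1 ov (leq_ltn_trans (leq0n _) old0).
have vlc := hinge_eq hinge Ul' el.
have Ul2 : v l.+2 \notin union_upto e n.
  apply/negP => Ul2; have := vinj l.+2 l.+1; rewrite !inE (overlap_eq ov Ul2 Ul' el2 el).
  by move=> /(_ (leqnn _) (leqnSn _) erefl) /eqP; rewrite eqSS (gtn_eqF (ltnSn l)).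
have e0 : v 0 \notin e n.
  apply/negP => e0; have := vinj 0 l.+1; rewrite !inE (hinge_eq hinge U0' e0) vlc.
  by move=> /(_ isT (leqnSn _) erefl).
by rewrite (omega_upto_old_new hinge U0' e0 el2 Ul2) vlc.
Qed.

Lemma omega_upto_walk n l v j r : single_overlaps n -> edge_walk n l v j ->
  r <= l -> (forall s, s <= l -> j r <= j s) ->
  (omega_upto e w n (v 0) (v l.+1) <-> w (j r) (v r) (v r.+1)).
Proof.
elim: n l v j r => [|n IH] l v j r ov walk le_rl rmin.
  by have [_ _ /(_ 0 isT)[]] := walk.
have ov' := single_overlapsW ov.
have [old_walk | [s le_sl js]] := edge_walk_old_or_new walk.
  by rewrite (omega_upto_walk_old ov old_walk); apply: IH.
have other_old := edge_walk_other_old walk le_sl js.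
case: l v j r walk le_rl rmin le_sl js other_old
  => [|l] v j r walk le_rl rmin le_sl js other_old.
  have s0 : s = 0 by lia.
  have r0 : r = 0 by lia.
  by subst s r; rewrite (omega_upto_walk_single_new ov walk js) js.
have rs : r != s.
  apply/eqP => rs; subst r.
  have [t le_tl ts] : exists2 t, t <= l.+1 & t != s.
    by case: (eqVneq s 0) => [-> | s0]; [exists 1 | exists 0; rewrite // eq_sym].
  by have := other_old t le_tl ts; have := rmin t le_tl; rewrite js; lia.
have [s0 | sl] := edge_walk_new_at_end ov walk le_sl js; subst s.
- case: r le_rl rmin rs => [//|r] le_rl rmin _.
  rewrite (omega_upto_walk_first_new ov walk js).
  apply: (IH l (fun t => v t.+1) (fun t => j t.+1)) => //.
    by apply: edge_walk_lower (edge_walk_behead walk) _ => t le_tl; apply: other_old.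
  by move=> t le_tl; apply: rmin.
- rewrite (omega_upto_walk_last_new ov walk js).
  apply: IH => //; first apply: edge_walk_lower (edge_walk_belast walk) _.
  + by move=> t le_tl; apply: other_old; lia.
  + lia.
  + by move=> t le_tl; apply: rmin; lia.
Qed.

Lemma is_path_edge_walk k l vs js x0 : is_path k e vs js -> size js = l.+1 ->
  uniq vs -> edge_walk k l (nth x0 vs) (nth 0 js).
Proof.
case=> size_vs /(all_nthP 0) js_lt js_uniq edges _ size_js vs_uniq; split.
- move=> a b; rewrite !inE => al bl /eqP.
  by rewrite nth_uniq ?size_vs ?size_js // => /eqP.
- by move=> a b; rewrite !inE => al bl /eqP; rewrite nth_uniq ?size_js // => /eqP.
- move=> t le_tl; have lt_t : t < size js by rewrite size_js.
  by have [? ?] := edges t x0 lt_t; split=> //; apply: js_lt.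
Qed.

End InsertionChain.

Theorem lemma4p2 (T : finType) (k : nat) (e : nat -> {set T})
    (w : nat -> rel T) :
  is_hypertree k e ->
  (forall i, 0 < i < k -> #|union_upto e i :&: e i| = 1) ->
  (forall i, i < k -> strict_total_on (e i) (w i)) ->
  forall (x y : T), x != y ->
  forall (vs : seq T) (js : seq nat),
    is_path k e vs js -> head y vs = x -> last x vs = y ->
  forall r, r < size js ->
    (forall s, s < size js -> nth 0 js r <= nth 0 js s) ->
    (omega_upto e w k x y <-> w (nth 0 js r) (nth x vs r) (nth x vs r.+1)).
Proof.
move=> _ ov _ x y xy vs js path hx ly r lt_r rmin.
have [l size_js] : exists l, size js = l.+1.
  by exists (size js).-1; rewrite prednK // (leq_ltn_trans _ lt_r).
have [size_vs _ _ _ ends] := path.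
case: vs size_vs hx ly path ends => [|x' vs] // size_vs /= -> ly path ends.
have vs_uniq : uniq (x :: vs).
  by case: (ends x) => // -[/= xl _]; rewrite xl ly eqxx in xy.
have y_eq : nth x (x :: vs) l.+1 = y.
  by move: size_vs; rewrite size_js -ly -(nth_last x) => -[->].
rewrite -{1}y_eq size_js in lt_r rmin *.
exact: omega_upto_walk ov (is_path_edge_walk x path size_js vs_uniq) lt_r rmin.
Qed.
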